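(* For every integer $n>0$, $\mathrm{DE2}(n)+\mathrm{DE2}(n-3)$ equals the number of partitions of $n$ into parts each of which is greater than $1$ and not divisible by $4$.
   Context: For a nonnegative integer $n$, $\mathrm{DE2}(n)$ denotes the number of partitions of $n$ in which no even part is repeated, and the largest part is odd and appears at least twice (so $\mathrm{DE2}(0)=0$); set $\mathrm{DE2}(m)=0$ for $m<0$. Equivalently, $\sum_{n\ge0}\mathrm{DE2}(n)q^n=\sum_{n\ge0}\frac{(-q^2;q^2)_n q^{4n+2}}{(q;q^2)_{n+1}}$, where $(a;q)_n=\prod_{j=0}^{n-1}(1-aq^j)$. *)

From mathcomp Require Import all_boot.
Set Implicit Arguments. Unset Strict Implicit. Unset Printing Implicit Defensive.

(* A partition of n is represented by its multiplicity function
   m : 'I_n.+1 -> 'I_n.+1, where m i is the number of times the part i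
   occurs (every multiplicity is at most n, every part at most n). This is a bijection with
   the usual partitions of n. *)
Definition partition_of (n : nat) (m : {ffun 'I_n.+1 -> 'I_n.+1}) : bool :=
  (nat_of_ord (m ord0) == 0) && (\sum_(i < n.+1) i * m i == n).

Definition occurs (n : nat) (m : {ffun 'I_n.+1 -> 'I_n.+1}) (i : 'I_n.+1) : bool :=
  0 < m i.

Definition DE2_partition (n : nat) (m : {ffun 'I_n.+1 -> 'I_n.+1}) : bool :=
  [&& partition_of m,
      [forall i : 'I_n.+1, ~~ odd i ==> (m i <= 1)] &
      [exists i : 'I_n.+1,
         [&& odd i, 2 <= m i & [forall j : 'I_n.+1, (i < j) ==> ~~ occurs m j]]]].

Definition DE2 (n : nat) : nat := #|[set m | @DE2_partition n m]|.

Definition P4_partition (n : nat) (m : {ffun 'I_n.+1 -> 'I_n.+1}) : bool :=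
  partition_of m &&
  [forall i : 'I_n.+1, occurs m i ==> ((1 < i) && ~~ (4 %| i))].

Definition P4 (n : nat) : nat := #|[set m | @P4_partition n m]|.

From mathcomp Require Import all_boot all_algebra ring zify.
From Stdlib Require Import Morphisms.
Set Implicit Arguments. Unset Strict Implicit. Unset Printing Implicit Defensive.
Import GRing.Theory Num.Theory.

(* Generating functions, with power series represented by polynomials compared
   modulo X^K and 1/(1 - q^i) by a truncated geometric sum.  Let G_m be the
   product over the parts i <= m of 1/(1 - q^i) (i odd) and 1 + q^i (i even),
   and G its limit.  Splitting on the largest part 2k+1, the generating
   function of DE2 is T = sum_k q^(2(2k+1)) G_(2k+1); put also
   S = sum_k q^(2k+1) G_(2k+1).  The steps G_(2k) -> G_(2k+1) -> G_(2k+2)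
   telescope to G = 1 + (1 + q) S and give S - T = q + q^2 S + q^3 T, whence
   (1 + q^3) T = (1 - q) G - 1.  By Euler's 1 + q^i = (1 - q^(2i))/(1 - q^i),
   (1 - q) G is the product of 1/(1 - q^i) over the i > 1 with 4 not dividing
   i, the generating function of the right-hand side; compare coefficients. *)

Definition p4_mult (i j : nat) : bool := (j == 0) || (1 < i) && ~~ (4 %| i).

Definition de2_mult (i0 i j : nat) : bool :=
  if i0 < i then j == 0 else if i == i0 then 2 <= j
  else if i == 0 then j == 0 else odd i || (j <= 1).

Definition weight_set (K n : nat) (A : nat -> nat -> bool) :
    {set {ffun 'I_K -> 'I_K}} :=
  [set m : {ffun 'I_K -> 'I_K} |
    [forall i : 'I_K, A i (m i)] && (\sum_(i < K) i * m i == n)].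

Lemma P4E n : P4 n = #|weight_set n.+1 n p4_mult|.
Proof.
apply: eq_card => m; rewrite !inE /P4_partition /partition_of /occurs.
apply/idP/idP => [/andP[/andP[m0 -> /forallP Pm]] | /andP[/forallP Pm ->]].
  rewrite andbT; apply/forallP => i.
  by move: (Pm i); rewrite /p4_mult; case: (m i) => [[|k] ?].
have := Pm ord0; rewrite /p4_mult /= orbF => -> /=.
by apply/forallP => i; move: (Pm i); rewrite /p4_mult; case: (m i) => [[|k] ?].
Qed.

Lemma card_exists_disjoint (I T : finType) (B : I -> pred T) :
  (forall i i' x, B i x -> B i' x -> i = i') ->
  #|[set x | [exists i, B i x]]| = \sum_i #|[set x | B i x]|.
Proof.
move=> Buniq; rewrite -sum1_card big_mkcond /=.
under [RHS]eq_bigr do rewrite -sum1_card big_mkcond /=.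
rewrite exchange_big /=; apply: eq_bigr => x _; rewrite inE.
have [[i Bix] | noB] := existsP.
  rewrite (bigD1 i) //= inE Bix big1 // => j ji; rewrite inE.
  by case: ifP => // Bjx; rewrite (Buniq _ _ _ Bix Bjx) eqxx in ji.
by rewrite big1 // => i _; rewrite inE; case: ifP => // Bix; case: noB; exists i.
Qed.

Section DE2Decomposition.
Variable n : nat.
Local Notation mults := {ffun 'I_n.+1 -> 'I_n.+1}.

Definition de2_top (i0 : 'I_n.+1) (m : mults) : bool :=
  odd i0 && (m \in weight_set n.+1 n (de2_mult i0)).

Lemma DE2_partitionE (m : mults) : DE2_partition m = [exists i0, de2_top i0 m].
Proof.
rewrite /DE2_partition /partition_of /occurs /de2_top; apply/idP/existsP.
  case/and3P=> /andP[m0 msum] /forallP evenP /existsP[i0 /and3P[oi0 mi0 /forallP topP]].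
  exists i0; rewrite oi0 inE msum andbT; apply/forallP => i; rewrite /de2_mult.
  case: ltnP => [i0i | ii0]; first by move: (topP i); rewrite i0i -eqn0Ngt.
  case: eqP => [/val_inj -> // | _].
  case: eqP => [i_0 | _]; first by move: m0; have -> : i = ord0 by apply: val_inj.
  by move: (evenP i); case: (odd i).
case=> i0 /andP[oi0]; rewrite inE => /andP[/forallP Am msum].
have m0 : m ord0 == 0 :> nat.
  by move: (Am ord0); rewrite /de2_mult /=; case: eqP => [i0_0 | //]; rewrite -i0_0 in oi0.
rewrite m0 msum /=; apply/andP; split.
  apply/forallP => i; apply/implyP => ei; move: (Am i); rewrite /de2_mult.
  case: ltnP => _; first by move/eqP->.
  case: eqP => [i_i0 | _]; first by rewrite i_i0 oi0 in ei.
  by rewrite (negbTE ei); case: eqP => // _ /eqP->.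
apply/existsP; exists i0; move: (Am i0); rewrite /de2_mult ltnn eqxx oi0 => -> /=.
by apply/forallP => j; apply/implyP => i0j; move: (Am j); rewrite /de2_mult i0j => /eqP->.
Qed.

Lemma de2_top_uniq (i0 i1 : 'I_n.+1) (m : mults) :
  de2_top i0 m -> de2_top i1 m -> i0 = i1.
Proof.
have notlt a b : de2_top a m -> de2_top b m -> ~~ (a < b).
  move=> /andP[_]; rewrite inE => /andP[/forallP Aa _] /andP[_]; rewrite inE.
  move=> /andP[/forallP Ab _]; apply/negP => ab.
  by move: (Aa b) (Ab b); rewrite /de2_mult ab ltnn eqxx => /eqP->.
move=> top0 top1; apply: val_inj.
by move: (notlt _ _ top0 top1) (notlt _ _ top1 top0); case: ltngtP.
Qed.

End DE2Decomposition.

Lemma DE2E n : DE2 n = \sum_(i0 < n.+1 | odd i0) #|weight_set n.+1 n (de2_mult i0)|.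
Proof.
rewrite /DE2 (_ : [set m | DE2_partition m] = [set m | [exists i0, de2_top i0 m]]).
  rewrite card_exists_disjoint; last exact: de2_top_uniq.
  rewrite [RHS]big_mkcond; apply: eq_bigr => i0 _; case: ifP => oi0.
    by apply: eq_card => m; rewrite inE /de2_top oi0.
  by apply/eqP; rewrite cards_eq0; apply/eqP/setP => m; rewrite !inE /de2_top oi0.
by apply/setP => m; rewrite !inE DE2_partitionE.
Qed.

Local Open Scope ring_scope.

Definition eqmodX (R : comNzRingType) (K : nat) (p q : {poly R}) : Prop :=
  exists r, p - q = r * 'X^K.

Notation "p = q %[modX K ]" := (eqmodX K p q)
  (at level 70, q at next level, format "p  =  q  %[modX  K ]") : ring_scope.

Section PolyModXn.
Variables (R : comNzRingType) (K : nat).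
Implicit Types p q : {poly R}.

Lemma eqmodX_refl p : p = p %[modX K].
Proof. by exists 0; rewrite subrr mul0r. Qed.

Lemma eqmodX_sym p q : p = q %[modX K] -> q = p %[modX K].
Proof. by case=> r e; exists (- r); rewrite mulNr -e opprB. Qed.

Lemma eqmodX_trans p q s : p = q %[modX K] -> q = s %[modX K] -> p = s %[modX K].
Proof. by case=> r e [r' e']; exists (r + r'); rewrite mulrDl -e -e'; ring. Qed.

#[global] Instance eqmodX_equivalence : Equivalence (@eqmodX R K).
Proof. by split; [exact: eqmodX_refl | exact: eqmodX_sym | exact: eqmodX_trans]. Qed.

Lemma eq_eqmodX p q : p = q -> p = q %[modX K].
Proof. by move->; reflexivity. Qed.

Lemma eqmodXD p q p' q' :
  p = q %[modX K] -> p' = q' %[modX K] -> p + p' = q + q' %[modX K].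
Proof. by case=> r e [r' e']; exists (r + r'); rewrite mulrDl -e -e'; ring. Qed.

Lemma eqmodXN p q : p = q %[modX K] -> - p = - q %[modX K].
Proof. by case=> r e; exists (- r); rewrite mulNr -e; ring. Qed.

Lemma eqmodXM p q p' q' :
  p = q %[modX K] -> p' = q' %[modX K] -> p * p' = q * q' %[modX K].
Proof.
case=> r e [r' e']; exists (r * p' + q * r').
have -> : p * p' - q * q' = (p - q) * p' + q * (p' - q') by ring.
by rewrite e e'; ring.
Qed.

#[global] Instance eqmodX_add_proper :
  Proper (@eqmodX R K ==> @eqmodX R K ==> @eqmodX R K) +%R.
Proof. by move=> ? ? ? ? ? ?; apply: eqmodXD. Qed.

#[global] Instance eqmodX_opp_proper : Proper (@eqmodX R K ==> @eqmodX R K) -%R.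
Proof. by move=> ? ?; apply: eqmodXN. Qed.

#[global] Instance eqmodX_mul_proper :
  Proper (@eqmodX R K ==> @eqmodX R K ==> @eqmodX R K) *%R.
Proof. by move=> ? ? ? ? ? ?; apply: eqmodXM. Qed.

Lemma eqmodX_sum (I : Type) (r : seq I) (P : pred I) (F G : I -> {poly R}) :
  (forall i, P i -> F i = G i %[modX K]) ->
  \sum_(i <- r | P i) F i = \sum_(i <- r | P i) G i %[modX K].
Proof.
move=> FG; apply: (big_ind2 (eqmodX K)) => [|x1 x2 y1 y2|//]; first exact: eqmodX_refl.
exact: eqmodXD.
Qed.

Lemma eqmodX_prod (I : Type) (r : seq I) (P : pred I) (F G : I -> {poly R}) :
  (forall i, P i -> F i = G i %[modX K]) ->
  \prod_(i <- r | P i) F i = \prod_(i <- r | P i) G i %[modX K].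
Proof.
move=> FG; apply: (big_ind2 (eqmodX K)) => [|x1 x2 y1 y2|//]; first exact: eqmodX_refl.
exact: eqmodXM.
Qed.

Lemma eqmodX_prod_nat (a b : nat) (F G : nat -> {poly R}) :
  (forall i, (a <= i < b)%N -> F i = G i %[modX K]) ->
  \prod_(a <= i < b) F i = \prod_(a <= i < b) G i %[modX K].
Proof.
move=> FG; rewrite big_nat_cond [X in _ = X %[modX _]]big_nat_cond.
by apply: eqmodX_prod => i /andP[/FG].
Qed.

Lemma eqmodX_sum0 (I : Type) (r : seq I) (P : pred I) (F : I -> {poly R}) :
  (forall i, P i -> F i = 0 %[modX K]) -> \sum_(i <- r | P i) F i = 0 %[modX K].
Proof. by move=> F0; rewrite (eqmodX_sum _ F0) big1 //; reflexivity. Qed.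

Lemma eqmodX_prod1 (I : Type) (r : seq I) (P : pred I) (F : I -> {poly R}) :
  (forall i, P i -> F i = 1 %[modX K]) -> \prod_(i <- r | P i) F i = 1 %[modX K].
Proof. by move=> F1; rewrite (eqmodX_prod _ F1) big1 //; reflexivity. Qed.

Lemma eqmodX_mulXn p a : (K <= a)%N -> p * 'X^a = 0 %[modX K].
Proof. by move=> Ka; exists (p * 'X^(a - K)); rewrite subr0 -mulrA -exprD subnK. Qed.

Lemma eqmodX_Xn a : (K <= a)%N -> ('X^a : {poly R}) = 0 %[modX K].
Proof. by rewrite -['X^a]mul1r; apply: eqmodX_mulXn. Qed.

Lemma eqmodX_coef p q i : p = q %[modX K] -> (i < K)%N -> p`_i = q`_i.
Proof. by case=> r e iK; apply/eqP; rewrite -subr_eq0 -coefB e coefMXn iK. Qed.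

Lemma eqmodX_mulIr u v p q :
  u * v = 1 %[modX K] -> p * u = q * u %[modX K] -> p = q %[modX K].
Proof.
move=> uv pq; rewrite -[p]mulr1 -[q]mulr1 -uv !mulrA pq; reflexivity.
Qed.

End PolyModXn.

Lemma eqmodX_le (R : comNzRingType) K K' (p q : {poly R}) :
  (K' <= K)%N -> p = q %[modX K] -> p = q %[modX K'].
Proof. by move=> le [r e]; exists (r * 'X^(K - K')); rewrite e -mulrA -exprD subnK. Qed.

Lemma eqmodX0 (R : comNzRingType) (p q : {poly R}) : p = q %[modX 0].
Proof. by exists (p - q); rewrite expr0 mulr1. Qed.

Section Counting.
Variable R : comNzRingType.

Lemma card_weight_set (K n : nat) (A : nat -> nat -> bool) :
  #|weight_set K n A|%:R
  = (\prod_(i < K) \sum_(j < K | A i j) 'X^(i * j) : {poly R})`_n.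
Proof.
under eq_bigr do rewrite big_mkcond /=.
rewrite bigA_distr_bigA /= coef_sum -sum1_card /weight_set big_mkcond natr_sum /=.
apply: eq_bigr => m _; rewrite inE.
have [/forallP Am | /forallPn[i nAi]] := boolP [forall i : 'I_K, A i (m i)]; last first.
  by rewrite [\prod_(_ < _) _](bigD1 i) //= (negbTE nAi) mul0r coef0.
rewrite (eq_bigr (fun i : 'I_K => 'X^(i * m i))) => [|i _]; last by rewrite Am.
by rewrite prodrXr coefXn eq_sym; case: eqP.
Qed.

End Counting.

Section GeneratingPolynomials.
Variables (R : comNzRingType) (K : nat).
Local Notation "{poly}" := {poly R}.

Definition geom i : {poly} := \sum_(j < K) 'X^(i * j).

Lemma geom_inv i : (0 < i)%N -> (1 - 'X^i) * geom i = 1 %[modX K].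
Proof.
move=> i_gt0; have -> : (1 - 'X^i) * geom i = 1 - 'X^i ^+ K.
  rewrite -{2}(expr1n _ K) subrXX; congr (_ * _).
  by apply: eq_bigr => j _; rewrite expr1n mul1r exprM.
by rewrite -exprM eqmodX_Xn ?leq_pmull // subr0; reflexivity.
Qed.

Lemma geom_large i : (K <= i)%N -> geom i = 1 %[modX K].
Proof.
rewrite /geom; case: K => [|K'] Ki; first exact: eqmodX0.
rewrite big_ord_recl muln0 expr0 eqmodX_sum0 => [|j _].
  by rewrite addr0; reflexivity.
by apply: eqmodX_Xn; rewrite (leq_trans Ki) // leq_pmulr.
Qed.

(* [de_gf m] counts the partitions into parts at most m with no repeated even
   part; [de1_gf] and [de2_gf] restrict to those whose largest part is odd and
   occurs at least once, resp. twice. *)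
Definition de_factor i : {poly} := if odd i then geom i else 1 + 'X^i.
Definition de_gf m : {poly} := \prod_(1 <= i < m.+1) de_factor i.
Definition de1_gf L : {poly} := \sum_(k < L) 'X^(k.*2.+1) * de_gf k.*2.+1.
Definition de2_gf L : {poly} := \sum_(k < L) 'X^((k.*2.+1).*2) * de_gf k.*2.+1.

Lemma de_gf0 : de_gf 0 = 1.
Proof. by rewrite /de_gf big_geq. Qed.

Lemma de_gfS m : de_gf m.+1 = de_gf m * de_factor m.+1.
Proof. by rewrite /de_gf big_nat_recr. Qed.

Lemma de_gf_odd k : (1 - 'X^(k.*2.+1)) * de_gf k.*2.+1 = de_gf k.*2 %[modX K].
Proof.
by rewrite de_gfS /de_factor /= odd_double /= mulrCA geom_inv // mulr1; reflexivity.
Qed.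

Lemma de_gf_even k : de_gf k.+1.*2 = (1 + 'X^((k.+1).*2)) * de_gf k.*2.+1.
Proof. by rewrite doubleS de_gfS /de_factor /= odd_double /= mulrC. Qed.

Lemma de_gf_double L : de_gf L.*2 = 1 + (1 + 'X) * de1_gf L %[modX K].
Proof.
elim: L => [|L IH]; first by rewrite de_gf0 /de1_gf big_ord0 mulr0 addr0; reflexivity.
rewrite de_gf_even /de1_gf big_ord_recr /= -/(de1_gf L) mulrDr addrA -IH -de_gf_odd.
by apply: eq_eqmodX; rewrite doubleS exprS; ring.
Qed.

Lemma de1_de2_gf L :
  de1_gf L.+1 - de2_gf L.+1 = 'X + 'X^2 * de1_gf L + 'X^3 * de2_gf L %[modX K].
Proof.
rewrite /de1_gf /de2_gf -sumrB.
transitivity (\sum_(k < L.+1) 'X^(k.*2.+1) * de_gf k.*2).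
  apply: eqmodX_sum => k _; rewrite -de_gf_odd; apply: eq_eqmodX.
  by rewrite -[(k.*2.+1).*2]addnn exprD; ring.
apply: eq_eqmodX; rewrite big_ord_recl de_gf0 mulr1 expr1 !mulr_sumr -addrA -big_split.
congr (_ + _); apply: eq_bigr => k _.
by rewrite lift0 /= de_gf_even -[(k.*2.+1).*2]addnn exprD doubleS !exprS; ring.
Qed.

Lemma de1_gfS L : (K <= L.*2.+1)%N -> de1_gf L.+1 = de1_gf L %[modX K].
Proof.
by move=> KL; rewrite /de1_gf big_ord_recr /= mulrC eqmodX_mulXn // addr0; reflexivity.
Qed.

Lemma de2_gfS L : (K <= L.*2.+1)%N -> de2_gf L.+1 = de2_gf L %[modX K].
Proof.
move=> KL; rewrite /de2_gf big_ord_recr /= mulrC eqmodX_mulXn ?addr0; first reflexivity.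
by lia.
Qed.

Lemma de_gf_large n m : (K <= n.+1)%N -> (n <= m)%N -> de_gf m = de_gf n %[modX K].
Proof.
move=> Kn; elim: m => [|m IH]; first by rewrite leqn0 => /eqP->; reflexivity.
rewrite leq_eqVlt => /orP[/eqP<- | nm]; first reflexivity.
rewrite de_gfS -IH // /de_factor; case: ifP => _.
  by rewrite geom_large ?mulr1; [reflexivity | apply: leq_trans nm].
by rewrite eqmodX_Xn ?addr0 ?mulr1; [reflexivity | apply: leq_trans nm].
Qed.

Lemma de2_gf_identity m :
  (K <= m.+1)%N -> (1 + 'X^3) * de2_gf K = (1 - 'X) * de_gf m - 1 %[modX K].
Proof.
move=> Km; have KK : (K <= K.*2.+1)%N by lia.
have -> : de_gf m = de_gf K.*2 %[modX K].
  by rewrite (@de_gf_large K.-1 m) ?(@de_gf_large K.-1 K.*2) //; [reflexivity | lia..].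
have ST := de1_de2_gf K; rewrite de1_gfS ?de2_gfS // in ST.
rewrite de_gf_double.
have -> : (1 - 'X) * (1 + (1 + 'X) * de1_gf K) - 1 =
  de1_gf K - de2_gf K - ('X + 'X^2 * de1_gf K + 'X^3 * de2_gf K)
  + (1 + 'X^3) * de2_gf K by ring.
by rewrite ST; apply: eq_eqmodX; ring.
Qed.

Definition mult4_factor (i : nat) : {poly} := if (4 %| i)%N then 1 - 'X^i else 1.
Definition p4_factor (i : nat) : {poly} := if (1 < i)%N && ~~ (4 %| i)%N then geom i else 1.

Lemma prod_even_double m :
  \prod_(1 <= i < m.+1) (if odd i then 1 else 1 - 'X^(i.*2)%N : {poly})
  = \prod_(1 <= i < m.*2.+1) mult4_factor i.
Proof.
elim: m => [|m IH]; first by rewrite !big_geq.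
rewrite big_nat_recr // IH doubleS (big_nat_recr m.*2.+2) // (big_nat_recr m.*2.+1) //=.
rewrite /mult4_factor.
have -> : (4 %| m.*2.+1)%N = false.
  by apply/negP => /(dvdn_trans (isT : 2 %| 4)%N); rewrite dvdn2 /= odd_double.
have -> : (4 %| m.*2.+2)%N = odd m.
  by rewrite -doubleS -mul2n (@dvdn_pmul2l 2 2) // dvdn2 /= negbK.
by rewrite mulr1; case: (odd m).
Qed.

Lemma p4_gf m :
  (0 < m)%N -> (K <= m.+1)%N ->
  \prod_(1 <= i < m.+1) p4_factor i = (1 - 'X) * de_gf m %[modX K].
Proof.
move=> m_gt0 Km; pose U := \prod_(1 <= i < m.+1) (1 - 'X^i : {poly}).
apply: (@eqmodX_mulIr _ _ U (\prod_(1 <= i < m.+1) geom i)).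
  rewrite -big_split big_nat_cond; apply: eqmodX_prod1 => i /andP[/andP[i_gt0 _] _].
  exact: geom_inv.
transitivity ((1 - 'X) * \prod_(1 <= i < m.+1) mult4_factor i).
  transitivity (\prod_(1 <= i < m.+1)
    (if (1 < i)%N && ~~ (4 %| i)%N then 1 else 1 - 'X^i : {poly})).
    rewrite /U -big_split /=; apply: eqmodX_prod_nat => i /andP[i_gt0 _].
    rewrite /p4_factor; case: ifP => _; last by rewrite mul1r; reflexivity.
    by rewrite mulrC geom_inv //; reflexivity.
  apply: eq_eqmodX; rewrite big_ltn // [in RHS]big_ltn //= expr1 mul1r; congr (_ * _).
  by apply: eq_big_nat => i /andP[-> _] /=; rewrite /mult4_factor; case: (4 %| i)%N.
symmetry; rewrite /U /de_gf -mulrA -big_split /=.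
transitivity ((1 - 'X) *
  \prod_(1 <= i < m.+1) (if odd i then 1 else 1 - 'X^(i.*2)%N : {poly})).
  apply: eqmodXM; first reflexivity.
  apply: eqmodX_prod_nat => i /andP[i_gt0 _].
  rewrite /de_factor; case: ifP => _; first by rewrite mulrC geom_inv //; reflexivity.
  by apply: eq_eqmodX; rewrite -addnn exprD; ring.
rewrite prod_even_double (big_cat_nat _ (n := m.+1)) //=; last by lia.
have -> : \prod_(m.+1 <= i < m.*2.+1) mult4_factor i = 1 %[modX K].
  rewrite big_nat_cond; apply: eqmodX_prod1 => i /andP[/andP[mi _] _].
  rewrite /mult4_factor; case: ifP => _; last reflexivity.
  by rewrite eqmodX_Xn ?subr0; [reflexivity | apply: leq_trans mi].
by rewrite mulr1; reflexivity.
Qed.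

Lemma sum_mult0 i : (0 < K)%N -> \sum_(j < K | j == 0%N :> nat) 'X^(i * j) = 1 :> {poly}.
Proof. by case: K => // K' _; rewrite big_mkcond big_ord_recl /= muln0 expr0 big1 ?addr0. Qed.

Lemma sum_mult_le1 i :
  (1 < K)%N -> \sum_(j < K | (j <= 1)%N) 'X^(i * j) = 1 + 'X^i :> {poly}.
Proof.
case: K => [|[|K']] // _; rewrite big_mkcond !big_ord_recl /=.
by rewrite muln0 muln1 expr0 big1 ?addr0.
Qed.

Lemma sum_mult_ge2 i :
  (0 < i)%N -> \sum_(j < K | (2 <= j)%N) 'X^(i * j) = 'X^(i.*2) * geom i %[modX K].
Proof.
move=> i_gt0; rewrite /geom; case: K => [|[|K']]; first exact: eqmodX0.
  by rewrite big_mkcond big_ord1 /= mulrC eqmodX_mulXn; [reflexivity | lia].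
rewrite big_mkcond [in X in X = _ %[modX _]]big_ord_recl [in X in X = _ %[modX _]]big_ord_recl.
rewrite /= !add0r mulr_sumr !big_ord_recr /= -!exprD.
rewrite [X in _ = _ + X %[modX _]]eqmodX_Xn ?[X in _ = _ + X + _ %[modX _]]eqmodX_Xn;
  try nia.
rewrite !addr0.
apply: eq_eqmodX; apply: eq_bigr => j _; rewrite -exprD -[bump 0 _]/(j.+2); congr ('X^_); nia.
Qed.

Lemma prod_p4_mult :
  (0 < K)%N ->
  \prod_(i < K) \sum_(j < K | p4_mult i j) 'X^(i * j) = \prod_(1 <= i < K) p4_factor i.
Proof.
move=> K_gt0; rewrite -(big_mkord xpredT (fun i => \sum_(j < K | p4_mult i j) 'X^(i * j))).
rewrite big_ltn // (eq_bigl (fun j : 'I_K => j == 0%N :> nat)) => [|j]; last first.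
  by rewrite /p4_mult /= orbF.
rewrite sum_mult0 // mul1r; apply: eq_big_nat => i _; rewrite /p4_factor.
case: ifP => good; first by apply: eq_bigl => j; rewrite /p4_mult good orbT.
rewrite (eq_bigl (fun j : 'I_K => j == 0%N :> nat)) ?sum_mult0 // => j.
by rewrite /p4_mult good orbF.
Qed.

Lemma prod_de2_mult i0 :
  odd i0 -> (i0 < K)%N ->
  \prod_(i < K) \sum_(j < K | de2_mult i0 i j) 'X^(i * j) = 'X^(i0.*2) * de_gf i0 %[modX K].
Proof.
move=> odd_i0 i0K; have i0_gt0 : (0 < i0)%N by case: i0 odd_i0 {i0K}.
pose F i := \sum_(j < K | de2_mult i0 i j) 'X^(i * j) : {poly}.
rewrite -(big_mkord xpredT F) (big_cat_nat _ (n := i0.+1)) //=.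
rewrite [X in _ * X]big1_seq => [|i /andP[_]]; last first.
  rewrite mem_index_iota => /andP[i0i _].
  rewrite /F (eq_bigl (fun j : 'I_K => j == 0%N :> nat)) => [|j]; last first.
    by rewrite /de2_mult i0i.
  by rewrite sum_mult0 //; lia.
rewrite mulr1 big_nat_recr //= big_ltn // /F.
rewrite (eq_bigl (fun j : 'I_K => j == 0%N :> nat)) ?sum_mult0 => [||j]; last first.
- by rewrite /de2_mult /=; case: eqP => // i0_0; rewrite -i0_0 in odd_i0.
- by lia.
rewrite (eq_bigl (fun j : 'I_K => (2 <= j)%N)) => [|j]; last by rewrite /de2_mult ltnn eqxx.
rewrite mul1r sum_mult_ge2 // /de_gf big_nat_recr //= /de_factor odd_i0 mulrCA.
apply: eqmodXM; first reflexivity.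
apply: eqmodXM; last reflexivity.
apply: eq_eqmodX; apply: eq_big_nat => i /andP[i_gt0 ii0]; rewrite /de2_mult.
have -> : (i0 < i)%N = false by lia.
have -> : (i == i0) = false by apply/eqP; lia.
have -> : (i == 0%N) = false by apply/eqP; lia.
case: ifP => odd_i; first by apply: eq_bigl => j; rewrite ?odd_i.
rewrite (eq_bigl (fun j : 'I_K => (j <= 1)%N)) => [|j]; last by rewrite ?odd_i.
by rewrite sum_mult_le1 //; lia.
Qed.

End GeneratingPolynomials.

Section Stability.
Variable R : comNzRingType.

Lemma geom_stable K K' i :
  (K' <= K)%N -> (0 < i)%N -> geom R K i = geom R K' i %[modX K'].
Proof.
move=> KK' i_gt0; rewrite -[geom R K i]mul1r -(geom_inv R K' i_gt0) mulrAC.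
by rewrite (eqmodX_le KK' (geom_inv R K i_gt0)) mul1r; reflexivity.
Qed.

Lemma de_gf_stable K K' m :
  (K' <= K)%N -> de_gf R K m = de_gf R K' m %[modX K'].
Proof.
move=> KK'; apply: eqmodX_prod_nat => i /andP[i_gt0 _]; rewrite /de_factor.
by case: ifP => _; [exact: geom_stable | reflexivity].
Qed.

Lemma de2_gf_large K L : (K <= L)%N -> de2_gf R K L = de2_gf R K K %[modX K].
Proof.
elim: L => [|L IH]; first by rewrite leqn0 => /eqP->; reflexivity.
rewrite leq_eqVlt => /orP[/eqP<- | KL]; first reflexivity.
by rewrite de2_gfS ?IH //; [reflexivity | lia].
Qed.

Lemma de2_gf_stable K K' :
  (K' <= K)%N -> de2_gf R K K = de2_gf R K' K' %[modX K'].
Proof.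
move=> KK'; rewrite -(de2_gf_large (L := K)) //.
by apply: eqmodX_sum => k _; rewrite de_gf_stable //; reflexivity.
Qed.

Lemma big_odd_double (F : nat -> {poly R}) L :
  \sum_(0 <= i < L.*2 | odd i) F i = \sum_(k < L) F k.*2.+1.
Proof.
elim: L => [|L IH]; first by rewrite big_geq ?big_ord0.
rewrite big_ord_recr /= -IH doubleS !big_mkcond /= !big_nat_recr //=.
by rewrite odd_double /= addr0 [in RHS]big_mkcond.
Qed.

Lemma de2_gfE K :
  \sum_(i0 < K | odd i0) 'X^(i0.*2) * de_gf R K i0 = de2_gf R K K %[modX K].
Proof.
rewrite -(big_mkord odd (fun i0 => 'X^(i0.*2) * de_gf R K i0)).
rewrite /de2_gf -(big_odd_double (fun i => 'X^(i.*2) * de_gf R K i)).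
rewrite [X in _ = X %[modX _]](big_cat_nat _ (n := K)) //=; last by lia.
rewrite [X in _ = _ + X %[modX _]]big_nat_cond.
rewrite [X in _ = _ + X %[modX _]]eqmodX_sum0 ?addr0 => [|i /andP[/andP[Ki _] _]].
  reflexivity.
by rewrite mulrC eqmodX_mulXn; [reflexivity | lia].
Qed.

End Stability.

Lemma P4_coef n : (P4 n)%:R = (\prod_(1 <= i < n.+1) p4_factor int n.+1 i)`_n.
Proof. by rewrite P4E card_weight_set prod_p4_mult. Qed.

Lemma DE2_coef m K : (m < K)%N -> (DE2 m)%:R = (de2_gf int K K)`_m.
Proof.
move=> mK; rewrite DE2E natr_sum.
under eq_bigr do rewrite card_weight_set.
rewrite -coef_sum; apply: eqmodX_coef (ltnSn m).
rewrite (de2_gf_stable _ mK) -de2_gfE.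
by apply: eqmodX_sum => i0 odd_i0; apply: prod_de2_mult.
Qed.

Local Close Scope ring_scope.

Theorem corollary2 (n : nat) (hn : 0 < n) :
  DE2 n + (if 3 <= n then DE2 (n - 3) else 0) = P4 n.
Proof.
have gf_identity : ((1 + 'X^3) * de2_gf int n.+1 n.+1
    = \prod_(1 <= i < n.+1) p4_factor int n.+1 i - 1 %[modX n.+1])%R.
  by rewrite p4_gf //; exact: de2_gf_identity.
have := eqmodX_coef gf_identity (ltnSn n).
rewrite mulrDl mul1r coefD mulrC coefMXn coefB coef1 -P4_coef -DE2_coef //.
have -> : (n == 0) = false by apply/eqP; lia.
rewrite subr0; case: leqP => n3; last by rewrite addr0 addn0 => /eqP; rewrite eqr_nat => /eqP.
by rewrite -DE2_coef -?natrD => [/eqP|]; [rewrite eqr_nat => /eqP | lia].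
Qed.
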